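(* For each $n,k\in\mathbb{N}$, $(\Sigma^{\mathrm{CoR}}_{n})_{\le k}/{\sim_{\mathrm{REL}}}$ is finite if and only if $(\Pi^{\mathrm{CoR}}_{n})_{\le k}/{\sim_{\mathrm{REL}}}$ is finite.
   Context: Fix a non-empty finite set $V$ of variables. CoR terms are generated by $t ::= a \mid \bot \mid \top \mid t \cup t \mid t \cap t \mid t^{-} \mid \mathrm{I} \mid \mathrm{D} \mid t \cdot t \mid t \dagger t \mid t^{\pi}$, where $a \in V$ and $\pi$ ranges over all maps $\{1,2\}\to\{1,2\}$. A structure $M$ consists of a non-empty set $|M|$ and a binary relation $a^M\subseteq|M|^2$ for each $a\in V$. The interpretation $[\![t]\!]_M\subseteq|M|^2$: $[\![a]\!]_M=a^M$, $[\![\bot]\!]_M=\emptyset$, $[\![\top]\!]_M=|M|^2$, $\cup,\cap$ set-theoretic, $[\![t^-]\!]_M=|M|^2\setminus[\![t]\!]_M$, $[\![\mathrm{I}]\!]_M=\{(x,y):x=y\}$, $[\![\mathrm{D}]\!]_M=\{(x,y):x\ne y\}$, $R\cdot S=\{(x,y):\exists z,(x,z)\in R\wedge(z,y)\in S\}$, $R\dagger S=\{(x,y):\forall z,(x,z)\in R\vee(z,y)\in S\}$, $R^{\pi}=\{(x_1,x_2):(x_{\pi(1)},x_{\pi(2)})\in R\}$. $t\sim_{\mathrm{REL}}s$ iff $[\![t]\!]_M=[\![s]\!]_M$ for all structures $M$. $\mathrm{vo}(t)$ is the number of occurrences of variables in $t$, and $S_{\le k}=\{t\in S:\mathrm{vo}(t)\le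 k\}$. The dot-dagger alternation hierarchy: $\Sigma^{\mathrm{CoR}}_n,\Pi^{\mathrm{CoR}}_n$ are the least sets such that $\Sigma^{\mathrm{CoR}}_0=\Pi^{\mathrm{CoR}}_0$ is the set of terms containing neither $\cdot$ nor $\dagger$; $\Sigma^{\mathrm{CoR}}_n\cup\Pi^{\mathrm{CoR}}_n\subseteq\Sigma^{\mathrm{CoR}}_{n+1}\cap\Pi^{\mathrm{CoR}}_{n+1}$; for $n\ge1$, if $s,u\in\Sigma^{\mathrm{CoR}}_n$ then $s\cup u,s\cap u,s\cdot u,s^{\pi}\in\Sigma^{\mathrm{CoR}}_n$ and $s\dagger u\in\Pi^{\mathrm{CoR}}_{n+1}$; for $n\ge1$, if $s,u\in\Pi^{\mathrm{CoR}}_n$ then $s\cup u,s\cap u,s\dagger u,s^{\pi}\in\Pi^{\mathrm{CoR}}_n$ and $s\cdot u\in\Sigma^{\mathrm{CoR}}_{n+1}$. *)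

From mathcomp Require Import all_boot.
From Stdlib Require List.
Set Implicit Arguments. Unset Strict Implicit. Unset Printing Implicit Defensive.

(* CoR terms over a variable type V; [Tperm p t] is t^pi with pi : {1,2} -> {1,2}
   encoded as a finite function on 'I_2 (index 0 = "1", index 1 = "2"). *)
Inductive term (V : Type) : Type :=
| Tvar of V
| Tbot
| Ttop
| Tcup of term V & term V
| Tcap of term V & term V
| Tcompl of term V
| TI
| TD
| Tdot of term V & term V
| Tdag of term V & term V
| Tperm of {ffun 'I_2 -> 'I_2} & term V.

Arguments Tbot {V}. Arguments Ttop {V}. Arguments TI {V}. Arguments TD {V}.

Record structure (V : Type) := Structure {
  carrier :> Type;
  carrier_nonempty : inhabited carrier;
  rel_of : V -> carrier -> carrier -> Prop }.

Unset Implicit Arguments.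
Fixpoint interp {V : Type} (M : structure V) (t : term V) : M -> M -> Prop :=
  match t with
  | Tvar a => @rel_of V M a
  | Tbot => fun _ _ => False
  | Ttop => fun _ _ => True
  | Tcup t u => fun x y => interp M t x y \/ interp M u x y
  | Tcap t u => fun x y => interp M t x y /\ interp M u x y
  | Tcompl t => fun x y => ~ interp M t x y
  | TI => fun x y => x = y
  | TD => fun x y => x <> y
  | Tdot t u => fun x y => exists z, interp M t x z /\ interp M u z y
  | Tdag t u => fun x y => forall z, interp M t x z \/ interp M u z y
  | Tperm p t => fun x1 x2 =>
      let xs (i : 'I_2) := if i == ord0 then x1 else x2 in
      interp M t (xs (p ord0)) (xs (p (@Ordinal 2 1 isT)))
  end.

Set Implicit Arguments.

Definition rel_equiv (V : Type) (t s : term V) : Prop :=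
  forall M : structure V, forall x y : M, interp M t x y <-> interp M s x y.

Fixpoint vo (V : Type) (t : term V) : nat :=
  match t with
  | Tvar _ => 1
  | Tbot | Ttop | TI | TD => 0
  | Tcup t u | Tcap t u | Tdot t u | Tdag t u => vo t + vo u
  | Tcompl t | Tperm _ t => vo t
  end.

Fixpoint dd_free (V : Type) (t : term V) : bool :=
  match t with
  | Tdot _ _ | Tdag _ _ => false
  | Tcup t u | Tcap t u => dd_free t && dd_free u
  | Tcompl t | Tperm _ t => dd_free t
  | _ => true
  end.

Inductive Sigma (V : Type) : nat -> term V -> Prop :=
| Sigma_0 t : dd_free t -> Sigma 0 t
| Sigma_S_of_Sigma n t : Sigma n t -> Sigma n.+1 t
| Sigma_S_of_Pi n t : Pi n t -> Sigma n.+1 t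
| Sigma_cup n s u : 1 <= n -> Sigma n s -> Sigma n u -> Sigma n (Tcup s u)
| Sigma_cap n s u : 1 <= n -> Sigma n s -> Sigma n u -> Sigma n (Tcap s u)
| Sigma_dot n s u : 1 <= n -> Sigma n s -> Sigma n u -> Sigma n (Tdot s u)
| Sigma_perm n p s : 1 <= n -> Sigma n s -> Sigma n (Tperm p s)
| Sigma_dot_Pi n s u : 1 <= n -> Pi n s -> Pi n u -> Sigma n.+1 (Tdot s u)
with Pi (V : Type) : nat -> term V -> Prop :=
| Pi_0 t : dd_free t -> Pi 0 t
| Pi_S_of_Sigma n t : Sigma n t -> Pi n.+1 t
| Pi_S_of_Pi n t : Pi n t -> Pi n.+1 t
| Pi_cup n s u : 1 <= n -> Pi n s -> Pi n u -> Pi n (Tcup s u)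
| Pi_cap n s u : 1 <= n -> Pi n s -> Pi n u -> Pi n (Tcap s u)
| Pi_dag n s u : 1 <= n -> Pi n s -> Pi n u -> Pi n (Tdag s u)
| Pi_perm n p s : 1 <= n -> Pi n s -> Pi n (Tperm p s)
| Pi_dag_Sigma n s u : 1 <= n -> Sigma n s -> Sigma n u -> Pi n.+1 (Tdag s u).

(* The quotient of the class S of terms by ~_REL is finite: finitely many
   members of S represent every ~_REL-class of S. *)
Definition finite_quotient (V : Type) (S : term V -> Prop) : Prop :=
  exists l : seq (term V),
    (forall s, List.In s l -> S s) /\
    (forall t, S t -> exists s, List.In s l /\ rel_equiv t s).

(* Pushing complement inward (De Morgan, with [I]/[D] and composition/dagger
   exchanged) gives a variable-count-preserving map [neg] with
   [neg t ~ t^-] that swaps Sigma_n and Pi_n.  Hence it maps a finite set of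
   representatives of one quotient onto one of the other. *)
From Stdlib Require Import Classical.
From Stdlib Require List.
From mathcomp Require Import all_boot.
Set Implicit Arguments.

Fixpoint neg {V : Type} (t : term V) : term V :=
  match t with
  | Tvar a => Tcompl (Tvar a)
  | Tbot => Ttop
  | Ttop => Tbot
  | Tcup s u => Tcap (neg s) (neg u)
  | Tcap s u => Tcup (neg s) (neg u)
  | Tcompl s => Tcompl (neg s)
  | TI => TD
  | TD => TI
  | Tdot s u => Tdag (neg s) (neg u)
  | Tdag s u => Tdot (neg s) (neg u)
  | Tperm p s => Tperm p (neg s)
  end.

Lemma vo_neg V (t : term V) : vo (neg t) = vo t.
Proof. by elim: t => //= [s -> u ->|s -> u ->|s -> u ->|s -> u ->]. Qed.

Lemma dd_free_neg V (t : term V) : dd_free t -> dd_free (neg t).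
Proof. by elim: t => //= [s IHs u IHu|s IHs u IHu] /andP[/IHs-> /IHu->]. Qed.

Lemma interp_neg V (M : structure V) (t : term V) (x y : M) :
  interp M (neg t) x y <-> ~ interp M t x y.
Proof.
elim: t x y => /= [a|||s IHs u IHu|s IHs u IHu|s IHs|||s IHs u IHu|s IHs u IHu|p s IHs]
  x y; try by rewrite ?IHs ?IHu; tauto.
- split=> [h [z [hs hu]]|h z].
  + by case: (h z) => [/IHs|/IHu].
  + by rewrite IHs IHu; apply: not_and_or => ?; apply: h; exists z.
- split=> [[z [hs hu]] h|h].
  + by rewrite IHs in hs; rewrite IHu in hu; case: (h z).
  + have [z /not_or_and[hs hu]] := not_all_ex_not _ _ h.
    by exists z; rewrite IHs IHu.
Qed.

Lemma rel_equiv_neg V (s t : term V) :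
  rel_equiv (neg t) s -> rel_equiv t (neg s).
Proof. by move=> hts M x y; rewrite interp_neg -hts interp_neg; tauto. Qed.

Scheme Sigma_Pi_ind := Induction for Sigma Sort Prop
with Pi_Sigma_ind := Induction for Pi Sort Prop.

Lemma Sigma_Pi_neg V :
  (forall n (t : term V), Sigma n t -> Pi n (neg t)) /\
  (forall n (t : term V), Pi n t -> Sigma n (neg t)).
Proof.
pose P n (t : term V) (_ : Sigma n t) := Pi n (neg t).
pose S n (t : term V) (_ : Pi n t) := Sigma n (neg t).
split; [apply: (Sigma_Pi_ind P S) | apply: (Pi_Sigma_ind P S)];
  rewrite /P /S => * /=;
  by [constructor; auto; apply: dd_free_neg | econstructor; eauto].
Qed.

Lemma finite_quotient_neg V (P Q : term V -> Prop) :
  (forall t, P t -> Q (neg t)) -> (forall t, Q t -> P (neg t)) ->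
  finite_quotient P -> finite_quotient Q.
Proof.
move=> PQ QP [l [lP reprP]]; exists (map neg l); split.
- by move=> _ /List.in_map_iff[s [<- /lP/PQ]].
- move=> t /QP/reprP[s [ls st]]; exists (neg s); split.
  + exact: List.in_map.
  + exact: rel_equiv_neg.
Qed.

Theorem lemma4p6 (V : finType) (hV : 0 < #|V|) (n k : nat) :
  finite_quotient (fun t : term V => Sigma n t /\ vo t <= k) <->
  finite_quotient (fun t : term V => Pi n t /\ vo t <= k).
Proof.
have [Sigma_neg Pi_neg] := Sigma_Pi_neg V.
by split; apply: finite_quotient_neg => t [ht hk]; rewrite vo_neg; auto.
Qed.
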